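(* Let $\mathcal{A}$ be a category with pullbacks and $\mathcal{D}$ a category. Then any orthogonal factorization system on the category $\mathrm{CartNt}[\mathcal{A},\mathcal{D}]$ (all functors $\mathcal{A}\to\mathcal{D}$, and only cartesian natural transformations as morphisms) restricts to an orthogonal factorization system on the full subcategory $\mathrm{Cart}[\mathcal{A},\mathcal{D}]$ of cartesian functors and cartesian natural transformations.
   Context: A natural transformation is cartesian if all its naturality squares are pullbacks; a functor is cartesian if it preserves pullbacks. An orthogonal factorization system $(\mathcal{E},\mathcal{M})$: both classes contain all isomorphisms and are closed under composition; each commuting square $g\circ e = m\circ f$ with $e\in\mathcal{E}$, $m\in\mathcal{M}$ has a unique diagonal $d$ with $d\circ e = f$, $m\circ d = g$; every morphism factors as $m\circ e$ with $e\in\mathcal{E}$, $m\in\mathcal{M}$. Restricting means taking the classes $\mathcal{E}\cap\mathrm{Cart}[\mathcal{A},\mathcal{D}]$ and $\mathcal{M}\cap\mathrm{Cart}[\mathcal{A},\mathcal{D}]$. *)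

From Stdlib Require Import ProofIrrelevance FunctionalExtensionality.

Record Category : Type := {
  ob :> Type;
  hom : ob -> ob -> Type;
  idm : forall a, hom a a;
  comp : forall a b c, hom b c -> hom a b -> hom a c;
  comp_assoc : forall a b c d (h : hom c d) (g : hom b c) (f : hom a b),
      comp a c d h (comp a b c g f) = comp a b d (comp b c d h g) f;
  comp_id_l : forall a b (f : hom a b), comp a b b (idm b) f = f;
  comp_id_r : forall a b (f : hom a b), comp a a b f (idm a) = f
}.
Arguments hom {C} a b : rename.
Arguments idm {C} a : rename.
Arguments comp {C} {a b c} g f : rename.
Arguments comp_assoc {C a b c d} h g f : rename.
Arguments comp_id_l {C a b} f : rename.
Arguments comp_id_r {C a b} f : rename.

Notation "g ∘ f" := (comp g f) (at level 40, left associativity).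

Definition is_pullback {C : Category} {x y z p : C}
  (f : hom x z) (g : hom y z) (p1 : hom p x) (p2 : hom p y) : Prop :=
  f ∘ p1 = g ∘ p2 /\
  forall (q : C) (q1 : hom q x) (q2 : hom q y), f ∘ q1 = g ∘ q2 ->
    exists! u : hom q p, p1 ∘ u = q1 /\ p2 ∘ u = q2.

Definition has_pullbacks (C : Category) : Prop :=
  forall (x y z : C) (f : hom x z) (g : hom y z),
    exists (p : C) (p1 : hom p x) (p2 : hom p y), is_pullback f g p1 p2.

Definition is_iso {C : Category} {a b : C} (f : hom a b) : Prop :=
  exists g : hom b a, g ∘ f = idm a /\ f ∘ g = idm b.

Record Functor (C D : Category) : Type := {
  fob :> C -> D;
  fmap : forall a b, hom a b -> hom (fob a) (fob b);
  fmap_id : forall a, fmap a a (idm a) = idm (fob a);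
  fmap_comp : forall a b c (g : hom b c) (f : hom a b),
      fmap a c (g ∘ f) = fmap b c g ∘ fmap a b f
}.
Arguments fob {C D} F a : rename.
Arguments fmap {C D} F {a b} u : rename.

Definition cartesian_functor {C D : Category} (F : Functor C D) : Prop :=
  forall (x y z p : C) (f : hom x z) (g : hom y z) (p1 : hom p x) (p2 : hom p y),
    is_pullback f g p1 p2 ->
    is_pullback (fmap F f) (fmap F g) (fmap F p1) (fmap F p2).

Record NatTrans {C D : Category} (F G : Functor C D) : Type := {
  component :> forall a : C, hom (F a) (G a);
  naturality : forall (a b : C) (u : hom a b),
      component b ∘ fmap F u = fmap G u ∘ component a
}.
Arguments component {C D F G} n a : rename.

Definition cartesian_nt {C D : Category} {F G : Functor C D} (α : NatTrans F G) : Prop :=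
  forall (a b : C) (u : hom a b), is_pullback (α b) (fmap G u) (fmap F u) (α a).

Lemma nt_eq {C D : Category} {F G : Functor C D} (α β : NatTrans F G) :
  (forall a, α a = β a) -> α = β.
Proof.
  destruct α as [a na], β as [b nb]; simpl; intros H.
  assert (a = b) by (apply functional_extensionality_dep; exact H).
  subst b. f_equal. apply proof_irrelevance.
Qed.

Definition nt_id {C D : Category} (F : Functor C D) : NatTrans F F.
Proof.
  refine {| component := fun a => idm (F a) |}.
  intros a b u. rewrite comp_id_l, comp_id_r. reflexivity.
Defined.

Definition nt_comp {C D : Category} {F G H : Functor C D}
  (β : NatTrans G H) (α : NatTrans F G) : NatTrans F H.
Proof.
  refine {| component := fun a => β a ∘ α a |}.
  intros a b u. rewrite <- comp_assoc, naturality, comp_assoc, naturality, comp_assoc.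
  reflexivity.
Defined.

Lemma nt_id_cartesian {C D : Category} (F : Functor C D) : cartesian_nt (nt_id F).
Proof.
  intros a b u; simpl. split.
  - rewrite comp_id_l, comp_id_r; reflexivity.
  - intros q q1 q2 Hq. rewrite comp_id_l in Hq. exists q2. split.
    + split; [symmetry; exact Hq | apply comp_id_l].
    + intros u' [_ H2]. rewrite comp_id_l in H2. symmetry; exact H2.
Qed.

Lemma nt_comp_cartesian {C D : Category} {F G H : Functor C D}
  (β : NatTrans G H) (α : NatTrans F G) :
  cartesian_nt β -> cartesian_nt α -> cartesian_nt (nt_comp β α).
Proof.
  intros Hb Ha a b u; simpl. split.
  - rewrite <- comp_assoc, naturality, comp_assoc, naturality, comp_assoc. reflexivity.
  - intros q q1 q2 Hq.
    destruct (Hb a b u) as [_ Ub]. destruct (Ha a b u) as [_ Ua].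
    rewrite <- comp_assoc in Hq.
    destruct (Ub q (α b ∘ q1) q2 Hq) as [v [[Hv1 Hv2] Hvu]].
    destruct (Ua q q1 v (eq_sym Hv1)) as [w [[Hw1 Hw2] Hwu]].
    exists w. split.
    + split; [exact Hw1|]. rewrite <- comp_assoc, Hw2. exact Hv2.
    + intros w' [H1 H2].
      assert (Ev : v = α a ∘ w').
      { apply Hvu. split.
        - rewrite comp_assoc, <- naturality, <- comp_assoc, H1. reflexivity.
        - rewrite comp_assoc. exact H2. }
      apply Hwu. split; [exact H1 | symmetry; exact Ev].
Qed.

Definition CartNtHom {C D : Category} (F G : Functor C D) : Type :=
  { α : NatTrans F G | cartesian_nt α }.

Definition CartNt (C D : Category) : Category.
Proof.
  refine {| ob := Functor C D;
            hom := fun F G => CartNtHom F G;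
            idm := fun F => exist _ (nt_id F) (nt_id_cartesian F);
            comp := fun F G H β α =>
              exist _ (nt_comp (proj1_sig β) (proj1_sig α))
                (nt_comp_cartesian _ _ (proj2_sig β) (proj2_sig α)) |}.
  - intros F G H K [h hh] [g hg] [f hf]. simpl.
    apply eq_sig_hprop; [intros; apply proof_irrelevance|]; simpl.
    apply nt_eq; intros x; simpl. apply comp_assoc.
  - intros F G [f hf]; simpl.
    apply eq_sig_hprop; [intros; apply proof_irrelevance|]; simpl.
    apply nt_eq; intros x; simpl. apply comp_id_l.
  - intros F G [f hf]; simpl.
    apply eq_sig_hprop; [intros; apply proof_irrelevance|]; simpl.
    apply nt_eq; intros x; simpl. apply comp_id_r.
Defined.

Definition FullSub (C : Category) (P : C -> Prop) : Category.
Proof.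
  refine {| ob := { x : C | P x };
            hom := fun x y => @hom C (proj1_sig x) (proj1_sig y);
            idm := fun x => idm (proj1_sig x);
            comp := fun x y z g f => g ∘ f |}.
  - intros; apply comp_assoc.
  - intros; apply comp_id_l.
  - intros; apply comp_id_r.
Defined.

Definition Cart (C D : Category) : Category :=
  FullSub (CartNt C D) cartesian_functor.

Definition MorClass (C : Category) : Type := forall a b : C, hom a b -> Prop.

Record is_OFS (C : Category) (E M : MorClass C) : Prop := {
  ofs_E_iso : forall (a b : C) (f : hom a b), is_iso f -> E a b f;
  ofs_M_iso : forall (a b : C) (f : hom a b), is_iso f -> M a b f;
  ofs_E_comp : forall (a b c : C) (f : hom a b) (g : hom b c),
      E a b f -> E b c g -> E a c (g ∘ f);
  ofs_M_comp : forall (a b c : C) (f : hom a b) (g : hom b c),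
      M a b f -> M b c g -> M a c (g ∘ f);
  ofs_lift : forall (a b x y : C) (e : hom a b) (m : hom x y) (f : hom a x) (g : hom b y),
      E a b e -> M x y m -> g ∘ e = m ∘ f ->
      exists! d : hom b x, d ∘ e = f /\ m ∘ d = g;
  ofs_fact : forall (a c : C) (h : hom a c),
      exists (b : C) (e : hom a b) (m : hom b c), E a b e /\ M b c m /\ h = m ∘ e
}.

Definition restrict_Cart {C D : Category} (E : MorClass (CartNt C D)) : MorClass (Cart C D) :=
  fun F G α => E (proj1_sig F) (proj1_sig G) α.

(** Factor a cartesian transformation [F => H] between cartesian functors in
    CartNt[A,D] as [F => G => H].  The middle functor [G] is again cartesian,
    because a cartesian transformation [α : G => H] into a cartesian functor
    reflects pullbacks: the image under [G] of a pullback square is cut out of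
    its image under [H] by naturality squares of [α], which are pullbacks, so
    the two halves of the pasting lemma apply.  Since Cart[A,D] is a full
    subcategory of CartNt[A,D], identities, composition and unique lifts are
    inherited, and the factorizations stay inside Cart[A,D]. *)

Section Pasting.

Context {C : Category}.

Lemma pullback_hom_ext {x y z p t : C} {f : hom x z} {g : hom y z}
  {p1 : hom p x} {p2 : hom p y} (u u' : hom t p) :
  is_pullback f g p1 p2 -> p1 ∘ u = p1 ∘ u' -> p2 ∘ u = p2 ∘ u' -> u = u'.
Proof.
  intros [Hsq Huniv] E1 E2.
  assert (Hu : f ∘ (p1 ∘ u) = g ∘ (p2 ∘ u)).
  { rewrite !comp_assoc, Hsq. reflexivity. }
  destruct (Huniv t _ _ Hu) as [v [_ Hv]].
  transitivity v; [symmetry |]; apply Hv; split; auto.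
Qed.

Lemma pullback_paste {x y z p w r : C} {f : hom x z} {g : hom y z}
  {p1 : hom p x} {p2 : hom p y} {h : hom w x} {q1 : hom r w} {q2 : hom r p} :
  is_pullback f g p1 p2 -> is_pullback h p1 q1 q2 ->
  is_pullback (f ∘ h) g q1 (p2 ∘ q2).
Proof.
  intros H1 H2.
  pose proof H1 as [Hsq1 Huniv1]. pose proof H2 as [Hsq2 Huniv2].
  split.
  - rewrite <- comp_assoc, Hsq2, !comp_assoc, Hsq1. reflexivity.
  - intros t s k Hsk. rewrite <- comp_assoc in Hsk.
    destruct (Huniv1 t _ _ Hsk) as [u [[Hu1 Hu2] _]].
    destruct (Huniv2 t s u (eq_sym Hu1)) as [v [[Hv1 Hv2] Hv]].
    exists v. split.
    + split; [exact Hv1 |]. rewrite <- comp_assoc, Hv2. exact Hu2.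
    + intros v' [Hv1' Hv2']. apply Hv. split; [exact Hv1' |].
      apply (pullback_hom_ext _ _ H1).
      * rewrite Hu1, comp_assoc, <- Hsq2, <- comp_assoc, Hv1'. reflexivity.
      * rewrite Hu2, comp_assoc. exact Hv2'.
Qed.

Lemma pullback_cancel {x y z p w r : C} {f : hom x z} {g : hom y z}
  {p1 : hom p x} {p2 : hom p y} {h : hom w x} {q1 : hom r w} {q2 : hom r p} :
  is_pullback f g p1 p2 -> is_pullback (f ∘ h) g q1 (p2 ∘ q2) ->
  h ∘ q1 = p1 ∘ q2 -> is_pullback h p1 q1 q2.
Proof.
  intros H1 [_ Huniv] Hsq. split; [exact Hsq |].
  intros t s k Hsk.
  assert (Hout : (f ∘ h) ∘ s = g ∘ (p2 ∘ k)).
  { destruct H1 as [Hsq1 _].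
    rewrite <- comp_assoc, Hsk, !comp_assoc, Hsq1. reflexivity. }
  destruct (Huniv t s (p2 ∘ k) Hout) as [v [[Hv1 Hv2] Hv]].
  assert (Hq2v : q2 ∘ v = k).
  { apply (pullback_hom_ext _ _ H1).
    - rewrite comp_assoc, <- Hsq, <- comp_assoc, Hv1. exact Hsk.
    - rewrite comp_assoc. exact Hv2. }
  exists v. split; [split; assumption |].
  intros v' [Hv1' Hv2']. apply Hv. split; [exact Hv1' |].
  rewrite <- comp_assoc, Hv2'. reflexivity.
Qed.

End Pasting.

Lemma cartesian_functor_of_cartesian_nt {C D : Category} {G H : Functor C D}
  (α : NatTrans G H) :
  cartesian_nt α -> cartesian_functor H -> cartesian_functor G.
Proof.
  intros Hα HH x y z p f g p1 p2 Hpb.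
  assert (Hsq : fmap G f ∘ fmap G p1 = fmap G g ∘ fmap G p2).
  { destruct Hpb as [Hsq _]. rewrite <- !fmap_comp, Hsq. reflexivity. }
  assert (Hout : is_pullback (fmap H f ∘ α x) (fmap H g)
                   (fmap G p1) (fmap H p2 ∘ α p)).
  { exact (pullback_paste (HH _ _ _ _ _ _ _ _ Hpb) (Hα p x p1)). }
  rewrite <- !naturality in Hout.
  exact (pullback_cancel (Hα y z g) Hout Hsq).
Qed.

Section FullSubOFS.

Context {C : Category} (P : C -> Prop) (E M : MorClass C).

Definition restrict_full (K : MorClass C) : MorClass (FullSub C P) :=
  fun x y f => K (proj1_sig x) (proj1_sig y) f.

Lemma is_OFS_FullSub :
  is_OFS C E M ->
  (forall (b c : C) (m : hom b c), M b c m -> P c -> P b) ->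
  is_OFS (FullSub C P) (restrict_full E) (restrict_full M).
Proof.
  intros [Eiso Miso Ecomp Mcomp Elift Efact] HM. split.
  - intros a b f Hf. exact (Eiso _ _ f Hf).
  - intros a b f Hf. exact (Miso _ _ f Hf).
  - intros a b c f g. exact (Ecomp _ _ _ f g).
  - intros a b c f g. exact (Mcomp _ _ _ f g).
  - intros a b x y e m f g. exact (Elift _ _ _ _ e m f g).
  - intros [a Ha] [c Hc] h.
    destruct (Efact a c h) as [b [e [m [He [Hm Hh]]]]].
    exists (exist P b (HM _ _ m Hm Hc)), e, m. auto.
Qed.

End FullSubOFS.

Theorem lemma4p5 (A D : Category) (HA : has_pullbacks A)
  (E M : MorClass (CartNt A D)) :
  is_OFS (CartNt A D) E M ->
  is_OFS (Cart A D) (restrict_Cart E) (restrict_Cart M).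
Proof.
  intros HO.
  apply (is_OFS_FullSub (C := CartNt A D) cartesian_functor E M HO).
  intros G H m _.
  exact (cartesian_functor_of_cartesian_nt (proj1_sig m) (proj2_sig m)).
Qed.
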